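(* Let $\{w^k\}$ be generated by the L-GADMM iteration and $\{\bar w^k\}$ be the auxiliary sequence. For any integer $t>0$ let $w_t=\frac1{t+1}\sum_{k=0}^t\bar w^k$ and let $u_t$ be its $u$-part (its first $m$ blocks). Then $w_t\in\mathcal{W}$ and $$\theta(u_t)-\theta(u)+(w_t-w)^\top F(w)\le\frac{1}{2(t+1)}\|w-w^0\|_H^2\qquad\forall w\in\mathcal{W}.$$
   Context: Standing setting. Let $m\ge 2$, $\ell$, $n_1,\dots,n_m$ be positive integers. For $i=1,\dots,m$ let $\theta_i:\mathbb{R}^{n_i}\to\mathbb{R}$ be convex, $\mathcal{X}_i\subseteq\mathbb{R}^{n_i}$ nonempty closed convex, $A_i\in\mathbb{R}^{\ell\times n_i}$ of full column rank, and $b\in\mathbb{R}^\ell$. Problem (P): $\min\{\sum_{i=1}^m\theta_i(x_i):\sum_{i=1}^mA_ix_i=b,\ x_i\in\mathcal{X}_i\}$, assumed to have a nonempty solution set. Write $u=(x_1,\dots,x_m)$, $w=(x_1,\dots,x_m,y)$ with $y\in\mathbb{R}^\ell$, $\theta(u)=\sum_i\theta_i(x_i)$, $F(w)=(-A_1^\top y,\dots,-A_m^\top y,\ \sum_iA_ix_i-b)$, $\mathcal{W}=\mathcal{X}_1\times\cdots\times\mathcal{X}_m\times\mathbb{R}^\ell$, and $\mathcal{W}^*=\{w^*\in\mathcal{W}:\theta(u)-\theta(u^* )+(w-w^* )^\top F(w^* )\ge0\ \forall w\in\mathcal{W}\}$ (nonempty). For symmetric $G$, $\|v\|_G^2:=v^\top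 Gv$; $\|\cdot\|$ is the Euclidean norm. Vectors are partitioned as $w=(R,x_m,y)$ with $R=(x_1,\dots,x_{m-1})$. Parameters: $\rho>0$, $\gamma\in(0,2)$, symmetric positive definite $P_i\in\mathbb{R}^{n_i\times n_i}$ ($i=1,\dots,m$) such that $G_1\succ0$, where $G_1$ is the symmetric block matrix with diagonal blocks $P_1,\dots,P_{m-1}$ and $(i,j)$ block $-\rho A_i^\top A_j$ for $i\ne j$, $1\le i,j\le m-1$. Matrices (w.r.t. the partition $(R,x_m,y)$): $Q=\begin{pmatrix}G_1&0&0\\0&\rho A_m^\top A_m+P_m&(1-\gamma)A_m^\top\\0&-A_m&\frac1\rho I_\ell\end{pmatrix}$, $M=\begin{pmatrix}I&0&0\\0&I_{n_m}&0\\0&-\rho A_m&\gamma I_\ell\end{pmatrix}$, $H=\begin{pmatrix}G_1&0&0\\0&P_m+\frac\rho\gamma A_m^\top A_m&\frac{1-\gamma}\gamma A_m^\top\\0&\frac{1-\gamma}\gamma A_m&\frac1{\gamma\rho}I_\ell\end{pmatrix}$, $N=Q^\top+Q-M^\top HM$. L-GADMM iteration: from an arbitrary $w^0=(x_1^0,\dots,x_m^0,y^0)\in\mathcal{W}$, for $k=0,1,2,\dots$: $x_j^{k+1}=\arg\min_{x_j\in\mathcal{X}_j}\{\theta_j(x_j)+\frac\rho2\|A_jx_j+\sum_{i=1,i\ne j}^mA_ix_i^k-b-\frac{y^k}\rho\|^2+\frac12\|x_j-x_j^k\|_{P_j}^2\}$ for $j=1,\dots,m-1$; $x_m^{k+1}=\arg\min_{x_m\in\mathcal{X}_m}\{\theta_m(x_m)+\frac\rho2\|\gamma\sum_{i=1}^{m-1}A_ix_i^{k+1}+(1-\gamma)(b-A_mx_m^k)+A_mx_m-b-\frac{y^k}\rho\|^2+\frac12\|x_m-x_m^k\|_{P_m}^2\}$;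 $y^{k+1}=y^k-\rho\big(\gamma\sum_{i=1}^{m-1}A_ix_i^{k+1}+(1-\gamma)(b-A_mx_m^k)+A_mx_m^{k+1}-b\big)$. Auxiliary sequence: $\bar w^k=(\bar x_1^k,\dots,\bar x_m^k,\bar y^k)$ with $\bar x_i^k=x_i^{k+1}$ ($i=1,\dots,m$) and $\bar y^k=y^k-\rho(\sum_{i=1}^{m-1}A_ix_i^{k+1}+A_mx_m^k-b)$; $\bar u^k=(\bar x_1^k,\dots,\bar x_m^k)$, $R^k=(x_1^k,\dots,x_{m-1}^k)$, $\bar R^k=(\bar x_1^k,\dots,\bar x_{m-1}^k)$. *)

From HB Require Import structures.
From mathcomp Require Import all_boot all_order all_algebra.
From mathcomp Require Import all_classical all_reals all_analysis.
Unset Printing Implicit Defensive.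
Import Order.TTheory GRing.Theory Num.Theory.
Import numFieldNormedType.Exports.
Local Open Scope ring_scope.
Local Open Scope classical_set_scope.

Section LGADMM.
Variable R : realType.

Definition vdot {k : nat} (u v : 'cV[R]_k) : R := \sum_(i < k) u i 0 * v i 0.

Definition sqnorm {k : nat} (v : 'cV[R]_k) : R := vdot v v.

Definition sqnormG {k : nat} (G : 'M[R]_k) (v : 'cV[R]_k) : R := vdot v (G *m v).

Definition spd {k : nat} (G : 'M[R]_k) : Prop :=
  G^T = G /\ forall v : 'cV[R]_k, v != 0 -> 0 < vdot v (G *m v).

Definition cvx_fun {k : nat} (f : 'cV[R]_k -> R) : Prop :=
  forall (x y : 'cV[R]_k) (s : R), 0 <= s <= 1 ->
    f (s *: x + (1 - s) *: y) <= s * f x + (1 - s) * f y.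

Definition cvx_set {k : nat} (X : set 'cV[R]_k) : Prop :=
  forall (x y : 'cV[R]_k) (s : R), X x -> X y -> 0 <= s <= 1 ->
    X (s *: x + (1 - s) *: y).

Definition is_argmin {T : Type} (X : set T) (f : T -> R) (x : T) : Prop :=
  X x /\ forall z, X z -> f x <= f z.

(* Blocks are indexed by 'I_m.+1, i.e. the paper's m is m.+1 here;
   the last block (paper's x_m) is ord_max, and the paper's R-part
   (x_1,...,x_{m-1}) consists of the indices i != ord_max. *)
Variables (m l : nat) (n : 'I_m.+1 -> nat).
Variable A : forall i : 'I_m.+1, 'M[R]_(l, n i).
Variable b : 'cV[R]_l.
Variable theta : forall i : 'I_m.+1, 'cV[R]_(n i) -> R.
Variable X : forall i : 'I_m.+1, set 'cV[R]_(n i).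

Local Notation block_vec := (forall i : 'I_m.+1, 'cV[R]_(n i)).

Definition theta_sum (u : block_vec) : R := \sum_(i < m.+1) theta i (u i).

Definition Asum (u : block_vec) : 'cV[R]_l := \sum_(i < m.+1) A i *m u i.

Definition Asum_R (u : block_vec) : 'cV[R]_l :=
  \sum_(i < m.+1 | i != ord_max) A i *m u i.

Definition in_W (u : block_vec) (y : 'cV[R]_l) : Prop := forall i, X i (u i).

(* (w' - w)^T F(w) with w' = (u', y'), w = (u, y),
   F(w) = (-A_1^T y, ..., -A_m^T y, sum_i A_i x_i - b) *)
Definition VI_term (u' : block_vec) (y' : 'cV[R]_l)
    (u : block_vec) (y : 'cV[R]_l) : R :=
  \sum_(i < m.+1) vdot (u' i - u i) (- ((A i)^T *m y))
  + vdot (y' - y) (Asum u - b).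

Definition in_Wstar (us : block_vec) (ys : 'cV[R]_l) : Prop :=
  in_W us ys /\ forall (u : block_vec) (y : 'cV[R]_l), in_W u y ->
    0 <= theta_sum u - theta_sum us + VI_term u y us ys.

Variables (rho gamma : R).
Variable P : forall i : 'I_m.+1, 'M[R]_(n i).

(* ||R||_{G_1}^2, where G_1 has diagonal blocks P_1..P_{m-1} and
   off-diagonal (i,j) block -rho A_i^T A_j (1 <= i,j <= m-1, i <> j) *)
Definition G1form (d : block_vec) : R :=
  \sum_(i < m.+1 | i != ord_max) vdot (d i) (P i *m d i)
  + \sum_(i < m.+1 | i != ord_max) \sum_(j < m.+1 | (j != ord_max) && (j != i))
      vdot (d i) ((- rho) *: ((A i)^T *m (A j *m d j))).

Definition G1_pd : Prop :=
  forall d : block_vec, (exists i, (i != ord_max) /\ d i != 0) -> 0 < G1form d.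

(* ||w' - w||_H^2 written out blockwise w.r.t. the partition (R, x_m, y) *)
Definition Hform (u' : block_vec) (y' : 'cV[R]_l)
    (u : block_vec) (y : 'cV[R]_l) : R :=
  let d := fun i => u' i - u i in
  let dm := d ord_max in
  let dy := y' - y in
  G1form d
  + vdot dm ((P ord_max + (rho / gamma) *: ((A ord_max)^T *m A ord_max)) *m dm)
  + vdot dm (((1 - gamma) / gamma) *: ((A ord_max)^T *m dy))
  + vdot dy (((1 - gamma) / gamma) *: (A ord_max *m dm))
  + vdot dy ((gamma * rho)^-1 *: dy).

Definition LGADMM_seq (x : nat -> block_vec) (y : nat -> 'cV[R]_l) : Prop :=
  in_W (x 0%N) (y 0%N) /\
  forall k : nat,
    (forall j : 'I_m.+1, j != ord_max ->
       is_argmin (X j)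
         (fun z => theta j z
            + rho / 2 * sqnorm (A j *m z
                 + \sum_(i < m.+1 | i != j) A i *m x k i - b - rho^-1 *: y k)
            + 1 / 2 * sqnormG (P j) (z - x k j))
         (x k.+1 j))
    /\ is_argmin (X ord_max)
         (fun z => theta ord_max z
            + rho / 2 * sqnorm (gamma *: Asum_R (x k.+1)
                 + (1 - gamma) *: (b - A ord_max *m x k ord_max)
                 + A ord_max *m z - b - rho^-1 *: y k)
            + 1 / 2 * sqnormG (P ord_max) (z - x k ord_max))
         (x k.+1 ord_max)
    /\ y k.+1 = y k - rho *: (gamma *: Asum_R (x k.+1)
                 + (1 - gamma) *: (b - A ord_max *m x k ord_max)
                 + A ord_max *m x k.+1 ord_max - b).

Definition xbar (x : nat -> block_vec) (k : nat) : block_vec := x k.+1.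
Definition ybar (x : nat -> block_vec) (y : nat -> 'cV[R]_l) (k : nat) : 'cV[R]_l :=
  y k - rho *: (Asum_R (x k.+1) + A ord_max *m x k ord_max - b).

Definition xavg (x : nat -> block_vec) (t : nat) : block_vec :=
  fun i => (t.+1%:R)^-1 *: \sum_(k < t.+1) xbar x k i.
Definition yavg (x : nat -> block_vec) (y : nat -> 'cV[R]_l) (t : nat) : 'cV[R]_l :=
  (t.+1%:R)^-1 *: \sum_(k < t.+1) ybar x y k.

End LGADMM.

Definition block_vec (R : realType) (m : nat) (n : 'I_m.+1 -> nat) :=
  forall i : 'I_m.+1, 'cV[R]_(n i).

From Pilot Require Import Defs.
From HB Require Import structures.
From mathcomp Require Import all_boot all_order all_algebra.
From mathcomp Require Import all_classical all_reals all_analysis.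
From mathcomp Require Import ring lra.
Import Order.TTheory GRing.Theory Num.Theory.
Import numFieldNormedType.Exports.
Local Open Scope ring_scope.
Local Open Scope classical_set_scope.
Set Implicit Arguments.
Unset Strict Implicit.
Unset Printing Implicit Defensive.

(* Write w = (u, y), let bar w^k be the auxiliary iterate and H, Q, M the
   matrices of the statement.  They are never formed: H is used through its
   blockwise expression [Hform], and Q through the bilinear form [Qform].
   1. Each x-subproblem minimises a convex function plus a proximal quadratic,
      so its minimiser satisfies a variational inequality ([prox_argmin_vi]).
      Summing these over the blocks and expressing the data through bar y^k
      gives, for every w in W ([step_Qform]),
        theta(u) - theta(bar u^k) + (w - bar w^k)^T F(bar w^k)
            >= (w - bar w^k)^T Q (w^k - bar w^k).
   2. Since w^{k+1} = w^k - M (w^k - bar w^k) and H M = Q, the right-hand side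
      is 1/2 (|w - w^{k+1}|_H^2 - |w - w^k|_H^2) plus a quadratic form in
      w^k - bar w^k that is nonnegative for 0 < gamma < 2 ([Qform_Hform]).
   3. By skew-symmetry of F the left-hand side is
      theta(u) - theta(bar u^k) - (bar w^k - w)^T F(w); telescoping over
      k = 0..t, Jensen's inequality for theta and linearity of this term in the
      averaged point yield the bound ([ergodic_bound]), while convexity of the
      sets X_i places the average w_t in W ([xavg_in_W]). *)

Section InnerProduct.
Variable R : realType.
Local Notation vdot := (vdot R).

Lemma vdotC k (u v : 'cV[R]_k) : vdot u v = vdot v u.
Proof. by rewrite /Defs.vdot; apply: eq_bigr => i _; rewrite mulrC. Qed.

Lemma vdotDl k (u v w : 'cV[R]_k) : vdot (u + v) w = vdot u w + vdot v w.
Proof. by rewrite /Defs.vdot -big_split; apply: eq_bigr => i _; rewrite mxE mulrDl. Qed.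

Lemma vdotZl k a (u w : 'cV[R]_k) : vdot (a *: u) w = a * vdot u w.
Proof. by rewrite /Defs.vdot mulr_sumr; apply: eq_bigr => i _; rewrite mxE mulrA. Qed.

Lemma vdotNl k (u w : 'cV[R]_k) : vdot (- u) w = - vdot u w.
Proof. by rewrite /Defs.vdot -sumrN; apply: eq_bigr => i _; rewrite mxE mulNr. Qed.

Lemma vdot0l k (w : 'cV[R]_k) : vdot 0 w = 0.
Proof. by rewrite /Defs.vdot big1 // => i _; rewrite mxE mul0r. Qed.

Lemma vdotBl k (u v w : 'cV[R]_k) : vdot (u - v) w = vdot u w - vdot v w.
Proof. by rewrite vdotDl vdotNl. Qed.

Lemma vdotDr k (u v w : 'cV[R]_k) : vdot w (u + v) = vdot w u + vdot w v.
Proof. by rewrite !(vdotC w) vdotDl. Qed.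

Lemma vdotZr k a (u w : 'cV[R]_k) : vdot w (a *: u) = a * vdot w u.
Proof. by rewrite !(vdotC w) vdotZl. Qed.

Lemma vdotNr k (u w : 'cV[R]_k) : vdot w (- u) = - vdot w u.
Proof. by rewrite !(vdotC w) vdotNl. Qed.

Lemma vdotBr k (u v w : 'cV[R]_k) : vdot w (u - v) = vdot w u - vdot w v.
Proof. by rewrite !(vdotC w) vdotBl. Qed.

Lemma vdot_suml k I (r : seq I) (Pr : pred I) (f : I -> 'cV[R]_k) w :
  vdot (\sum_(i <- r | Pr i) f i) w = \sum_(i <- r | Pr i) vdot (f i) w.
Proof. exact: (big_morph (fun u => vdot u w) (fun a b => vdotDl a b w) (vdot0l w)). Qed.

Lemma vdot_sumr k I (r : seq I) (Pr : pred I) (f : I -> 'cV[R]_k) w :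
  vdot w (\sum_(i <- r | Pr i) f i) = \sum_(i <- r | Pr i) vdot w (f i).
Proof. by rewrite vdotC vdot_suml; apply: eq_bigr => i _; rewrite vdotC. Qed.

Lemma vdotE k (u v : 'cV[R]_k) : vdot u v = (u^T *m v) 0 0.
Proof. by rewrite /Defs.vdot mxE; apply: eq_bigr => i _; rewrite mxE. Qed.

Lemma vdot_mulmx p q (M : 'M[R]_(p, q)) u v : vdot u (M *m v) = vdot (M^T *m u) v.
Proof. by rewrite !vdotE trmx_mul trmxK mulmxA. Qed.

Lemma vdot_sym k (M : 'M[R]_k) u v : M^T = M -> vdot u (M *m v) = vdot v (M *m u).
Proof. by move=> HM; rewrite vdot_mulmx HM vdotC. Qed.

Lemma vdot_ge0 k (u : 'cV[R]_k) : 0 <= vdot u u.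
Proof. by rewrite /Defs.vdot; apply: sumr_ge0 => i _; rewrite -expr2 sqr_ge0. Qed.

Lemma spd_ge0 k (M : 'M[R]_k) u : spd R M -> 0 <= vdot u (M *m u).
Proof.
case=> _ H; have [->|nz] := eqVneq u 0; first by rewrite vdot0l.
by apply/ltW/H.
Qed.

Lemma vdot_quadB p (M : 'M[R]_p) (a c : 'cV[R]_p) : M^T = M ->
  vdot (a - c) (M *m (a - c)) = vdot a (M *m a) - 2 * vdot a (M *m c) + vdot c (M *m c).
Proof. by move=> hM; rewrite mulmxBr !vdotBl !vdotBr (vdot_sym c a hM); ring. Qed.

End InnerProduct.

Lemma sub_recenter (V : zmodType) (u z c : V) : u - z = (u - c) - (z - c).
Proof. by rewrite opprB addrA subrK. Qed.

Section Averages.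
Variable R : realType.

(* The average of N+2 points is a convex combination of the average of the
   first N+1 of them and the last one; the weights are recorded here. *)
Lemma avg_weights (N : nat) :
  let s := (N.+1%:R / N.+2%:R : R) in
  s * (N.+1%:R)^-1 = (N.+2%:R)^-1 /\ 1 - s = (N.+2%:R)^-1 /\ 0 <= s <= 1.
Proof.
move=> s; have hN := ler0n R N.
split; first by rewrite /s; field; rewrite !lt0r_neq0 //; lra.
split; first by rewrite /s; field; rewrite lt0r_neq0 //; lra.
rewrite /s; apply/andP; split; first exact: divr_ge0.
by rewrite ler_pdivrMr ?ltr0n // mul1r ler_nat.
Qed.

Lemma avg_recr k (z : nat -> 'cV[R]_k) (N : nat) :
  (N.+2%:R)^-1 *: \sum_(j < N.+2) z j =
  (N.+1%:R / N.+2%:R) *: ((N.+1%:R)^-1 *: \sum_(j < N.+1) z j)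
  + (1 - N.+1%:R / N.+2%:R) *: z N.+1.
Proof.
have [e1 [e2 _]] := avg_weights N.
by rewrite big_ord_recr /= scalerA e1 e2 scalerDr.
Qed.

Lemma convex_avg k (C : set 'cV[R]_k) (z : nat -> 'cV[R]_k) (N : nat) :
  cvx_set R C -> (forall j, (j <= N)%N -> C (z j)) ->
  C ((N.+1%:R)^-1 *: \sum_(j < N.+1) z j).
Proof.
move=> hC; elim: N => [|N IH] hz.
  by rewrite big_ord1 invr1 scale1r; apply: hz.
have [_ [_ s01]] := avg_weights N.
rewrite avg_recr; apply: hC => //; last exact: hz.
by apply: IH => j hj; apply: hz; apply: leqW.
Qed.

Lemma convex_avg_le k (f : 'cV[R]_k -> R) (z : nat -> 'cV[R]_k) (N : nat) :
  cvx_fun R f ->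
  f ((N.+1%:R)^-1 *: \sum_(j < N.+1) z j) <= (N.+1%:R)^-1 * \sum_(j < N.+1) f (z j).
Proof.
move=> hf; elim: N => [|N IH]; first by rewrite !big_ord1 invr1 scale1r mul1r.
have [e1 [e2 /andP[s0 s1]]] := avg_weights N.
rewrite avg_recr; apply: le_trans (hf _ _ _ _) _; first by rewrite s0.
rewrite [in X in _ <= X]big_ord_recr /= e2 mulrDr lerD2r.
by apply: (le_trans (ler_wpM2l s0 IH)); rewrite mulrA e1.
Qed.

Lemma vdot_avg p (z : nat -> 'cV[R]_p) w g N :
  vdot R ((N.+1%:R)^-1 *: \sum_(j < N.+1) z j - w) g
  = (N.+1%:R)^-1 * \sum_(j < N.+1) vdot R (z j - w) g.
Proof.
rewrite vdotBl vdotZl vdot_suml.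
under [in RHS]eq_bigr => j _ do rewrite vdotBl.
rewrite sumrB sumr_const card_ord -mulr_natr.
have h : (N.+1%:R : R) != 0 by rewrite pnatr_eq0.
by field.
Qed.

End Averages.

Section ProxVI.
Variable R : realType.
Local Notation vdot := (vdot R).

Lemma ge0_of_ge0_perturb (a c : R) :
  (forall s, 0 < s -> s <= 1 -> 0 <= a + s * c) -> 0 <= a.
Proof.
move=> H; rewrite leNgt; apply/negP => a0.
have [c0|c0] := lerP c 0.
  by have := H 1 ltr01 (lexx _); rewrite mul1r; lra.
have [s1|s1] := lerP (- a / (2 * c)) 1.
  have sp : 0 < - a / (2 * c) by apply: divr_gt0; lra.
  have := H _ sp s1.
  have -> : - a / (2 * c) * c = - a / 2 by field; apply/lt0r_neq0.
  lra.
have := H 1 ltr01 (lexx _); rewrite mul1r.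
by move: s1; rewrite ltr_pdivlMr; lra.
Qed.

Lemma vdot_sqrDZ k (r w : 'cV[R]_k) s :
  vdot (r + s *: w) (r + s *: w) = vdot r r + 2 * s * vdot r w + s ^+ 2 * vdot w w.
Proof. rewrite !vdotDl !vdotDr !vdotZl !vdotZr (vdotC w r); ring. Qed.

(* First-order optimality of a proximal least-squares step: if zs minimises
   th z + rho/2 |A z + c|^2 + 1/2 |z - z0|_P^2 over the convex set Xs, then
   for all z in Xs
     th z - th zs + rho (A (z - zs))^T (A zs + c) + (z - zs)^T P (zs - z0) >= 0.
   Proof: compare with zs + s (z - zs) and let s go to 0. *)
Lemma prox_argmin_vi p q (Xs : set 'cV[R]_p) (th : 'cV[R]_p -> R) (A : 'M[R]_(q,p))
  (c : 'cV[R]_q) (P : 'M[R]_p) (z0 zs : 'cV[R]_p) (rho : R) (F : 'cV[R]_p -> R) :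
  cvx_fun R th -> cvx_set R Xs -> P^T = P ->
  (forall z, F z = th z + rho / 2 * sqnorm R (A *m z + c) + 1 / 2 * sqnormG R P (z - z0)) ->
  is_argmin R Xs F zs -> forall z, Xs z ->
  0 <= th z - th zs + rho * vdot (A *m (z - zs)) (A *m zs + c)
       + vdot (z - zs) (P *m (zs - z0)).
Proof.
move=> hth hX hP HF [Xzs Hmin] z Xz; set d := z - zs.
apply: (@ge0_of_ge0_perturb _
  (rho / 2 * vdot (A *m d) (A *m d) + 1 / 2 * vdot d (P *m d))) => s s0 s1.
have s01 : 0 <= s <= 1 by rewrite (ltW s0) s1.
have e : s *: z + (1 - s) *: zs = zs + s *: d.
  by apply/matrixP => i j; rewrite !mxE; ring.
have min_s := Hmin _ (hX _ _ _ Xz Xzs s01).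
have cvx_s := hth z zs s s01.
rewrite e !HF in min_s; rewrite e in cvx_s.
have eA : A *m (zs + s *: d) + c = (A *m zs + c) + s *: (A *m d).
  by rewrite mulmxDr scalemxAr addrAC.
have eP : zs + s *: d - z0 = (zs - z0) + s *: d by rewrite addrAC.
rewrite /sqnorm /sqnormG eA eP vdot_sqrDZ in min_s.
move: min_s; move: (A *m zs + c) (zs - z0) => r e0 min_s.
rewrite (mulmxDr P e0) -scalemxAr !vdotDl !vdotDr !vdotZl !vdotZr in min_s.
rewrite (vdot_sym e0 d hP) (vdotC r) in min_s.
have key : 0 <= s * (th z - th zs + rho * vdot (A *m d) r + vdot d (P *m e0)
     + s * (rho / 2 * vdot (A *m d) (A *m d) + 1 / 2 * vdot d (P *m d))).
  lra.
by rewrite pmulr_rge0 in key.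
Qed.

End ProxVI.

Section QuadraticForms.
Variable R : realType.
Local Notation vdot := (vdot R).
Variables (m l : nat) (n : 'I_m.+1 -> nat).
Variable A : forall i : 'I_m.+1, 'M[R]_(l, n i).
Variables (rho gamma : R).
Variable P : forall i : 'I_m.+1, 'M[R]_(n i).
Local Notation bv := (forall i : 'I_m.+1, 'cV[R]_(n i)).
Local Notation G1form := (G1form R m l n A rho P).
Local Notation last := (@ord_max m).

Definition G1bil (d e : bv) : R :=
  \sum_(i < m.+1 | i != last) vdot (d i) (P i *m e i)
  + \sum_(i < m.+1 | i != last) \sum_(j < m.+1 | (j != last) && (j != i))
      vdot (d i) ((- rho) *: ((A i)^T *m (A j *m e j))).

Lemma G1form_bil d : G1form d = G1bil d d.
Proof. by []. Qed.

Lemma G1bilBl d e f : G1bil (fun i => d i - e i) f = G1bil d f - G1bil e f.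
Proof.
rewrite /G1bil.
under eq_bigr => i _ do rewrite vdotBl.
under [X in _ + X = _]eq_bigr => i _ do under eq_bigr => j _ do rewrite vdotBl.
under [X in _ + X = _]eq_bigr => i _ do rewrite sumrB.
rewrite !sumrB; ring.
Qed.

Lemma G1bilC d e : (forall i, (P i)^T = P i) -> G1bil d e = G1bil e d.
Proof.
move=> hP; rewrite /G1bil; congr (_ + _).
  by apply: eq_bigr => i _; rewrite vdot_sym.
have h (d' e' : bv) i j : vdot (d' i) ((- rho) *: ((A i)^T *m (A j *m e' j)))
   = - rho * vdot (A i *m d' i) (A j *m e' j).
  by rewrite vdotZr vdot_mulmx trmxK.
under eq_bigr => i _ do under eq_bigr => j _ do rewrite h.
under [RHS]eq_bigr => i _ do under eq_bigr => j _ do rewrite h.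
rewrite (exchange_big_dep (fun j => j != last)) /=; last by move=> i j _ /andP[].
apply: eq_bigr => j hj; apply: eq_big; first by move=> i; rewrite hj /= (eq_sym j).
by move=> i _; rewrite vdotC.
Qed.

Lemma G1bilBr d e f : (forall i, (P i)^T = P i) ->
  G1bil f (fun i => d i - e i) = G1bil f d - G1bil f e.
Proof. by move=> hP; rewrite G1bilC // G1bilBl !(G1bilC f). Qed.

Lemma G1form_sub d e : (forall i, (P i)^T = P i) ->
  G1form (fun i => d i - e i) = G1form d - 2 * G1bil d e + G1form e.
Proof.
move=> hP; rewrite (G1form_bil (fun i => d i - e i)) (G1form_bil d) (G1form_bil e).
by rewrite G1bilBl !G1bilBr // (G1bilC e d) //; ring.
Qed.

Lemma G1form_ge0 d : G1_pd R m l n A rho P -> 0 <= G1form d.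
Proof.
move=> hpd.
have [[i [hi hd]] | hno] := pselect (exists i, i != last /\ d i != 0).
  by apply/ltW/hpd; exists i.
have z i : i != last -> d i = 0.
  by move=> hi; apply/eqP; apply/negPn/negP => hd; apply: hno; exists i.
rewrite G1form_bil /G1bil big1 ?add0r; last by move=> i hi; rewrite z // vdot0l.
by rewrite big1 // => i hi; rewrite big1 // => j _; rewrite z // vdot0l.
Qed.

(* The (x_m, y) part of |.|_H^2 without P_m, as a form in (A_m d_m, d_y). *)
Definition Hlast (al q : 'cV[R]_l) : R :=
  rho / gamma * vdot al al + 2 * ((1 - gamma) / gamma) * vdot al q
  + (gamma * rho)^-1 * vdot q q.

Lemma Hform_blocks u' y' u y :
  Hform R m l n A rho gamma P u' y' u y =
  G1form (fun i => u' i - u i)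
  + vdot (u' last - u last) (P last *m (u' last - u last))
  + Hlast (A last *m (u' last - u last)) (y' - y).
Proof.
rewrite /Hform /Hlast /=; move: (u' last - u last) (y' - y) => dm dy.
rewrite mulmxDl -scalemxAl -mulmxA vdotDr !vdotZr !(vdot_mulmx (A last)^T) trmxK.
rewrite (vdotC dy); ring.
Qed.

(* For 0 < gamma < 2: gamma rho Hlast al q = |rho al + (1-gamma) q|^2
   + gamma (2 - gamma) |q|^2 >= 0. *)
Lemma Hlast_ge0 al q : 0 < rho -> 0 < gamma < 2 -> 0 <= Hlast al q.
Proof.
move=> r0 /andP[g0 g2].
have -> : Hlast al q = (gamma * rho)^-1 *
   (vdot (rho *: al + (1 - gamma) *: q) (rho *: al + (1 - gamma) *: q)
    + gamma * (2 - gamma) * vdot q q).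
  rewrite /Hlast !vdotDl !vdotDr !vdotZl !vdotZr (vdotC q al).
  by field; rewrite !lt0r_neq0.
apply: mulr_ge0; first by rewrite invr_ge0; apply/ltW/mulr_gt0.
apply: addr_ge0; first exact: vdot_ge0.
by apply: mulr_ge0; [apply: mulr_ge0; lra | exact: vdot_ge0].
Qed.

Lemma Hform_ge0 u' y' u y : G1_pd R m l n A rho P -> spd R (P last) ->
  0 < rho -> 0 < gamma < 2 -> 0 <= Hform R m l n A rho gamma P u' y' u y.
Proof.
move=> hpd hP r0 hg; rewrite Hform_blocks.
by apply: addr_ge0; [apply: addr_ge0; [exact: G1form_ge0 | exact: spd_ge0] |
  exact: Hlast_ge0].
Qed.

(* d^T Q e for d = (d_u, d_y), e = (e_u, e_y), in blocks (R, x_m, y). *)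
Definition Qform (d e : bv) (dy ey : 'cV[R]_l) : R :=
  G1bil d e + vdot (d last) (P last *m e last)
  + rho * vdot (A last *m d last) (A last *m e last)
  + (1 - gamma) * vdot (A last *m d last) ey
  + rho^-1 * vdot dy ey - vdot dy (A last *m e last).

(* The (x_m, y) part of the identity  d^T Q e - 1/2 (|d - M e|_H^2 - |d - e|_H^2)
   = 1/2 |e|_N^2  (the G_1 and P_m parts are handled by [G1form_sub]). *)
Lemma Hlast_step al be dy ey : rho != 0 -> gamma != 0 ->
  rho * vdot al be + (1 - gamma) * vdot al ey + rho^-1 * vdot dy ey - vdot dy be
  - 2^-1 * (Hlast al (dy - (1 - gamma) *: ey - rho *: be) - Hlast (al - be) (dy - ey))
  = 2^-1 * ((2 - gamma) / rho * vdot ey ey).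
Proof.
move=> r0 g0; rewrite /Hlast !vdotDl !vdotDr !vdotNl !vdotNr !vdotZl !vdotZr.
rewrite ?(vdotC be al) ?(vdotC ey al) ?(vdotC dy al) ?(vdotC ey be) ?(vdotC dy be) ?(vdotC ey dy).
by field; rewrite r0 g0.
Qed.

End QuadraticForms.

Section Skew.
Variable R : realType.
Local Notation vdot := (vdot R).
Variables (m l : nat) (n : 'I_m.+1 -> nat).
Variable A : forall i : 'I_m.+1, 'M[R]_(l, n i).
Variable b : 'cV[R]_l.
Local Notation bv := (forall i : 'I_m.+1, 'cV[R]_(n i)).
Local Notation Asum := (Asum R m l n A).

Lemma VI_term_u (u' u : bv) y : \sum_(i < m.+1) vdot (u' i - u i) (- ((A i)^T *m y))
  = - vdot (Asum u' - Asum u) y.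
Proof.
rewrite /Asum -sumrB vdot_suml -sumrN; apply: eq_bigr => i _.
by rewrite vdotNr vdot_mulmx trmxK mulmxBr.
Qed.

(* F is affine with a skew-symmetric linear part, so
   (w' - w)^T F(w) = - (w - w')^T F(w'). *)
Lemma VI_term_skew (u' u : bv) y' y :
  VI_term R m l n A b u' y' u y = - VI_term R m l n A b u y u' y'.
Proof.
rewrite /VI_term !VI_term_u !vdotBl !vdotBr.
rewrite (vdotC y (Asum u')) (vdotC y (Asum u)) (vdotC y' (Asum u')) (vdotC y' (Asum u)).
ring.
Qed.

End Skew.

Section Iteration.
Variable R : realType.
Local Notation vdot := (vdot R).
Variables (m l : nat) (n : 'I_m.+1 -> nat).
Variable A : forall i : 'I_m.+1, 'M[R]_(l, n i).
Variable b : 'cV[R]_l.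
Variable theta : forall i : 'I_m.+1, 'cV[R]_(n i) -> R.
Variable X : forall i : 'I_m.+1, set 'cV[R]_(n i).
Arguments theta : clear implicits.
Arguments X : clear implicits.
Variables (rho gamma : R).
Variable P : forall i : 'I_m.+1, 'M[R]_(n i).
Local Notation bv := (forall i : 'I_m.+1, 'cV[R]_(n i)).
Local Notation last := (@ord_max m).
Local Notation theta_sum := (theta_sum R m n theta).
Local Notation VI_term := (VI_term R m l n A b).
Local Notation Hform := (Hform R m l n A rho gamma P).
Local Notation Qform := (Qform A rho gamma P).
Local Notation lgadmm := (LGADMM_seq R m l n A b theta X rho gamma P).

Variables (x : nat -> bv) (y : nat -> 'cV[R]_l).
Local Notation ybar := (ybar R m l n A b rho x y).

(* The shifted residual of the j-th subproblem (j < m), written via bar y^k. *)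
Lemma residual_R (q p S1 S2 yk yb : 'cV[R]_l) : rho != 0 ->
  yb = yk - rho *: (q + S2 + p - b) ->
  q + (p + S1 - b - rho^-1 *: yk) = - (rho^-1 *: yb) + (S1 - S2).
Proof. by move=> r0 ->; apply/matrixP => i j; rewrite !mxE; field. Qed.

Lemma block_vi_R (k : nat) (j : 'I_m.+1) (u : bv) :
  cvx_fun R (theta j) -> cvx_set R (X j) -> (P j)^T = P j -> 0 < rho ->
  lgadmm x y -> j != last -> X j (u j) ->
  vdot (u j - x k.+1 j) (P j *m (x k j - x k.+1 j))
  + \sum_(i < m.+1 | (i != last) && (i != j))
      vdot (u j - x k.+1 j) ((- rho) *: ((A j)^T *m (A i *m (x k i - x k.+1 i))))
  <= theta j (u j) - theta j (x k.+1 j) - vdot (A j *m (u j - x k.+1 j)) (ybar k).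
Proof.
move=> hth hX hP r0 [_ Hk] hj hu; have [Hj _] := Hk k.
have r0' : rho != 0 by apply: lt0r_neq0.
set c := \sum_(i < m.+1 | i != j) A i *m x k i - b - rho^-1 *: y k.
have vi : 0 <= theta j (u j) - theta j (x k.+1 j)
   + rho * vdot (A j *m (u j - x k.+1 j)) (A j *m x k.+1 j + c)
   + vdot (u j - x k.+1 j) (P j *m (x k.+1 j - x k j)).
  by apply: (prox_argmin_vi hth hX hP _ (Hj j hj) hu) => z; rewrite /c !addrA.
have others_k : \sum_(i < m.+1 | i != j) A i *m x k i =
    A last *m x k last + \sum_(i < m.+1 | (i != last) && (i != j)) A i *m x k i.
  rewrite (bigD1 last) /=; last by rewrite eq_sym.
  by congr (_ + _); apply: eq_bigl => i; rewrite andbC.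
have others_k1 : Asum_R R m l n A (x k.+1) =
    A j *m x k.+1 j + \sum_(i < m.+1 | (i != last) && (i != j)) A i *m x k.+1 i.
  by rewrite /Asum_R (bigD1 j).
have res : A j *m x k.+1 j + c = - (rho^-1 *: ybar k)
   + \sum_(i < m.+1 | (i != last) && (i != j)) A i *m (x k i - x k.+1 i).
  under [X in _ = _ + X]eq_bigr => i _ do rewrite mulmxBr.
  by rewrite sumrB /c others_k; apply: residual_R => //; rewrite /Defs.ybar others_k1.
have coupling : \sum_(i < m.+1 | (i != last) && (i != j))
      vdot (u j - x k.+1 j) ((- rho) *: ((A j)^T *m (A i *m (x k i - x k.+1 i))))
  = - rho * \sum_(i < m.+1 | (i != last) && (i != j))
      vdot (A j *m (u j - x k.+1 j)) (A i *m (x k i - x k.+1 i)).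
  by rewrite mulr_sumr; apply: eq_bigr => i _; rewrite vdotZr vdot_mulmx trmxK.
rewrite res vdotDr vdotNr vdotZr vdot_sumr -(opprB (x k j)) mulmxN vdotNr in vi.
rewrite coupling; rewrite mulrDr mulrN mulrA mulfV // mul1r in vi; lra.
Qed.

(* The shifted residual of the m-th subproblem, written via bar y^k. *)
Lemma residual_last (S p q yk yb : 'cV[R]_l) : rho != 0 ->
  yb = yk - rho *: (S + p - b) ->
  q + (gamma *: S + (1 - gamma) *: (b - p) - b - rho^-1 *: yk) =
  - (rho^-1 *: yb) + (rho^-1 * (gamma - 1)) *: (yk - yb) - (p - q).
Proof. by move=> r0 ->; apply/matrixP => i j; rewrite !mxE; field. Qed.

Lemma block_vi_last (k : nat) (u : bv) :
  cvx_fun R (theta last) -> cvx_set R (X last) -> (P last)^T = P last -> 0 < rho ->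
  lgadmm x y -> X last (u last) ->
  vdot (u last - x k.+1 last) (P last *m (x k last - x k.+1 last))
  + rho * vdot (A last *m (u last - x k.+1 last)) (A last *m (x k last - x k.+1 last))
  + (1 - gamma) * vdot (A last *m (u last - x k.+1 last)) (y k - ybar k)
  <= theta last (u last) - theta last (x k.+1 last)
     - vdot (A last *m (u last - x k.+1 last)) (ybar k).
Proof.
move=> hth hX hP r0 [_ Hk] hu; have [_ [Hm _]] := Hk k.
have r0' : rho != 0 by apply: lt0r_neq0.
set c := gamma *: Asum_R R m l n A (x k.+1)
   + (1 - gamma) *: (b - A last *m x k last) - b - rho^-1 *: y k.
have vi : 0 <= theta last (u last) - theta last (x k.+1 last)
   + rho * vdot (A last *m (u last - x k.+1 last)) (A last *m x k.+1 last + c)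
   + vdot (u last - x k.+1 last) (P last *m (x k.+1 last - x k last)).
  apply: (prox_argmin_vi hth hX hP _ Hm hu) => z.
  congr (_ + _ * _ + _); congr (sqnorm _ _).
  by apply/matrixP => i0 j0; rewrite /c !mxE; ring.
have res : A last *m x k.+1 last + c = - (rho^-1 *: ybar k)
   + (rho^-1 * (gamma - 1)) *: (y k - ybar k) - A last *m (x k last - x k.+1 last).
  by rewrite mulmxBr; apply: residual_last.
rewrite res vdotBr vdotDr vdotNr !vdotZr -(opprB (x k last)) mulmxN vdotNr in vi.
have e (s1 s2 s3 : R) : rho * (- (rho^-1 * s1) + rho^-1 * (gamma - 1) * s2 - s3)
   = - s1 + (gamma - 1) * s2 - rho * s3 by field.
by rewrite e in vi; lra.
Qed.

(* The constraint residual of bar u^k, written via the dual step y^k - bar y^k. *)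
Lemma residual_constraint (S p q yk yb : 'cV[R]_l) : rho != 0 ->
  yb = yk - rho *: (S + p - b) ->
  S + q - b = rho^-1 *: (yk - yb) - (p - q).
Proof. by move=> r0 ->; apply/matrixP => i j; rewrite !mxE; field. Qed.

(* The y-row of w^{k+1} = w^k - M (w^k - bar w^k), written via y^k - bar y^k. *)
Lemma dual_update (S p q yk yk1 yb v : 'cV[R]_l) :
  yk1 = yk - rho *: (gamma *: S + (1 - gamma) *: (b - p) + q - b) ->
  yb = yk - rho *: (S + p - b) ->
  v - yk1 = (v - yb) - (1 - gamma) *: (yk - yb) - rho *: (p - q).
Proof. by move=> -> ->; apply/matrixP => i j; rewrite !mxE; ring. Qed.

Lemma step_Qform (k : nat) (u : bv) (v : 'cV[R]_l) :
  (forall i, cvx_fun R (theta i)) -> (forall i, cvx_set R (X i)) ->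
  (forall i, (P i)^T = P i) -> 0 < rho -> lgadmm x y -> in_W R m l n X u v ->
  Qform (fun i => u i - x k.+1 i) (fun i => x k i - x k.+1 i) (v - ybar k) (y k - ybar k)
  <= theta_sum u - theta_sum (x k.+1) + VI_term u v (x k.+1) (ybar k).
Proof.
move=> hth hX hP r0 Hseq hu.
have r0' : rho != 0 by apply: lt0r_neq0.
have blocks : theta_sum u - theta_sum (x k.+1) + VI_term u v (x k.+1) (ybar k)
   = \sum_(i < m.+1) (theta i (u i) - theta i (x k.+1 i)
        - vdot (A i *m (u i - x k.+1 i)) (ybar k))
     + vdot (v - ybar k) (Asum R m l n A (x k.+1) - b).
  rewrite /Defs.theta_sum /Defs.VI_term -sumrB addrA -big_split /=; congr (_ + _).
  by apply: eq_bigr => i _; rewrite vdotNr vdot_mulmx trmxK.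
rewrite blocks (bigD1 last) //=.
have vi_R : G1bil A rho P (fun i => u i - x k.+1 i) (fun i => x k i - x k.+1 i)
   <= \sum_(i < m.+1 | i != last) (theta i (u i) - theta i (x k.+1 i)
        - vdot (A i *m (u i - x k.+1 i)) (ybar k)).
  rewrite /G1bil -big_split /=; apply: ler_sum => i hi.
  exact: (block_vi_R k (hth i) (hX i) (hP i) r0 Hseq hi (hu i)).
have vi_last := block_vi_last k (hth last) (hX last) (hP last) r0 Hseq (hu last).
have cons : vdot (v - ybar k) (Asum R m l n A (x k.+1) - b)
   = rho^-1 * vdot (v - ybar k) (y k - ybar k)
     - vdot (v - ybar k) (A last *m (x k last - x k.+1 last)).
  have -> : Asum R m l n A (x k.+1) - b = rho^-1 *: (y k - ybar k)
     - A last *m (x k last - x k.+1 last).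
    rewrite mulmxBr /Defs.Asum (bigD1 last) //= addrC.
    exact: residual_constraint.
  by rewrite [LHS]vdotBr vdotZr.
rewrite /Qform /=; lra.
Qed.

(* Step 2: (w - bar w^k)^T Q (w^k - bar w^k)
   >= 1/2 (|w - w^{k+1}|_H^2 - |w - w^k|_H^2), because the difference is
   1/2 |w^k - bar w^k|_N^2 with N positive semidefinite for 0 < gamma < 2. *)
Lemma Qform_Hform (k : nat) (u : bv) (v : 'cV[R]_l) :
  (forall i, spd R (P i)) -> 0 < rho -> 0 < gamma < 2 -> G1_pd R m l n A rho P ->
  lgadmm x y ->
  2^-1 * (Hform u v (x k.+1) (y k.+1) - Hform u v (x k) (y k))
  <= Qform (fun i => u i - x k.+1 i) (fun i => x k i - x k.+1 i) (v - ybar k) (y k - ybar k).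
Proof.
move=> hspd r0 hg hpd [_ Hk]; have [_ [_ Hy]] := Hk k.
have hP i : (P i)^T = P i by case: (hspd i).
have r0' : rho != 0 by apply: lt0r_neq0.
have g0' : gamma != 0 by case/andP: hg => g0 _; apply: lt0r_neq0.
have Hnext := Hform_blocks A rho gamma P u v (x k.+1) (y k.+1).
rewrite (dual_update v Hy (erefl (ybar k))) -mulmxBr in Hnext.
have Hcur := Hform_blocks A rho gamma P u v (x k) (y k).
have recenter : (fun i => u i - x k i) = (fun i => (u i - x k.+1 i) - (x k i - x k.+1 i)).
  by apply: functional_extensionality_dep => i; apply: sub_recenter.
rewrite recenter G1form_sub // (sub_recenter (u last) (x k last) (x k.+1 last)) in Hcur.
rewrite (sub_recenter v (y k) (ybar k)) vdot_quadB // (mulmxBr (A last)) in Hcur.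
have hlast := Hlast_step (A last *m (u last - x k.+1 last))
   (A last *m (x k last - x k.+1 last)) (v - ybar k) (y k - ybar k) r0' g0'.
have nG := G1form_ge0 (fun i => x k i - x k.+1 i) hpd.
have nP := spd_ge0 (x k last - x k.+1 last) (hspd last).
have nY : 0 <= (2 - gamma) / rho * vdot (y k - ybar k) (y k - ybar k).
  apply: mulr_ge0; last exact: vdot_ge0.
  by apply: divr_ge0; [case/andP: hg => _ g2; lra | apply: ltW].
rewrite /Qform /=; lra.
Qed.

Lemma step_bound (k : nat) (u : bv) (v : 'cV[R]_l) :
  (forall i, cvx_fun R (theta i)) -> (forall i, cvx_set R (X i)) ->
  (forall i, spd R (P i)) -> 0 < rho -> 0 < gamma < 2 -> G1_pd R m l n A rho P ->
  lgadmm x y -> in_W R m l n X u v ->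
  2^-1 * (Hform u v (x k.+1) (y k.+1) - Hform u v (x k) (y k))
  <= theta_sum u - theta_sum (x k.+1) - VI_term (x k.+1) (ybar k) u v.
Proof.
move=> hth hX hspd r0 hg hpd Hseq hu.
have hP i : (P i)^T = P i by case: (hspd i).
rewrite VI_term_skew opprK.
exact: le_trans (Qform_Hform k u v hspd r0 hg hpd Hseq) (step_Qform k hth hX hP r0 Hseq hu).
Qed.

End Iteration.

Section Ergodic.
Variable R : realType.

Lemma telescope_le (a h : nat -> R) N : (forall k, 2^-1 * (h k.+1 - h k) <= a k) ->
  2^-1 * (h N - h 0%N) <= \sum_(k < N) a k.
Proof.
move=> H; elim: N => [|N IH]; first by rewrite big_ord0 subrr mulr0.
by rewrite big_ord_recr /=; have := H N; lra.
Qed.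

Lemma ergodic_bound (t : nat) (Tu Tavg Vavg : R) (a v h : nat -> R) :
  (forall k, 2^-1 * (h k.+1 - h k) <= Tu - a k - v k) -> 0 <= h t.+1 ->
  Tavg <= (t.+1%:R)^-1 * \sum_(k < t.+1) a k ->
  Vavg = (t.+1%:R)^-1 * \sum_(k < t.+1) v k ->
  Tavg - Tu + Vavg <= (2 * t.+1%:R)^-1 * h 0%N.
Proof.
move=> hstep hT hJ ->; set c := (t.+1%:R : R)^-1 in hJ *.
have tele := telescope_le t.+1 hstep.
rewrite !sumrB sumr_const card_ord -mulr_natl in tele.
have c0 : 0 <= c by rewrite /c invr_ge0 ler0n.
have sums : c * (\sum_(k < t.+1) a k + \sum_(k < t.+1) v k)
    <= c * (t.+1%:R * Tu + 2^-1 * h 0%N).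
  by apply: ler_wpM2l => //; lra.
have avg : c * (t.+1%:R * Tu + 2^-1 * h 0%N) = Tu + (2 * t.+1%:R)^-1 * h 0%N.
  by rewrite /c; field; apply/lt0r_neq0; have := ler0n R t; lra.
rewrite avg mulrDr in sums; move: hJ sums.
move: (c * \sum_(k < t.+1) a k) (c * \sum_(k < t.+1) v k) => ca cv.
move: ((2 * t.+1%:R)^-1 * h 0%N) => e; lra.
Qed.

Variables (m l : nat) (n : 'I_m.+1 -> nat).
Variable A : forall i : 'I_m.+1, 'M[R]_(l, n i).
Variable b : 'cV[R]_l.
Variable theta : forall i : 'I_m.+1, 'cV[R]_(n i) -> R.
Variable X : forall i : 'I_m.+1, set 'cV[R]_(n i).
Arguments theta : clear implicits.
Arguments X : clear implicits.
Variables (rho gamma : R).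
Variable P : forall i : 'I_m.+1, 'M[R]_(n i).
Local Notation bv := (forall i : 'I_m.+1, 'cV[R]_(n i)).
Variables (x : nat -> bv) (y : nat -> 'cV[R]_l).

Lemma theta_sum_avg_le t : (forall i, cvx_fun R (theta i)) ->
  theta_sum R m n theta (xavg R m n x t)
  <= (t.+1%:R)^-1 * \sum_(k < t.+1) theta_sum R m n theta (xbar R m n x k).
Proof.
move=> hth; rewrite /theta_sum [X in _ <= _ * X]exchange_big mulr_sumr.
by apply: ler_sum => i _; apply: (convex_avg_le (fun k => xbar R m n x k i) t (hth i)).
Qed.

(* The VI term is affine in its first point, hence commutes with averaging. *)
Lemma VI_term_avg t (u : bv) (v : 'cV[R]_l) :
  VI_term R m l n A b (xavg R m n x t) (yavg R m l n A b rho x y t) u v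
  = (t.+1%:R)^-1 * \sum_(k < t.+1)
      VI_term R m l n A b (xbar R m n x k) (ybar R m l n A b rho x y k) u v.
Proof.
rewrite /VI_term big_split /= exchange_big mulrDr mulr_sumr.
congr (_ + _); last exact: (vdot_avg (fun k => ybar R m l n A b rho x y k)).
by apply: eq_bigr => i _; exact: (vdot_avg (fun k => xbar R m n x k i)).
Qed.

Lemma xavg_in_W t (v : 'cV[R]_l) : (forall i, cvx_set R (X i)) ->
  LGADMM_seq R m l n A b theta X rho gamma P x y -> in_W R m l n X (xavg R m n x t) v.
Proof.
move=> hX [_ Hk] i; rewrite /xavg.
apply: (convex_avg (z := fun k => xbar R m n x k i)) => // k _.
have [Hj [Hm _]] := Hk k; rewrite /xbar.
by have [->|hi] := eqVneq i ord_max; [case: Hm | case: (Hj i hi)].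
Qed.

End Ergodic.

(* The paper's m (>= 2) blocks are indexed by 'I_m.+1 with 1 <= m;
   the paper's last block x_m is the index ord_max. *)
Theorem theorem4p1 (R : realType) (m l : nat) (n : 'I_m.+1 -> nat)
  (A : forall i : 'I_m.+1, 'M[R]_(l, n i)) (b : 'cV[R]_l)
  (theta : forall i : 'I_m.+1, 'cV[R]_(n i) -> R)
  (X : forall i : 'I_m.+1, set 'cV[R]_(n i))
  (rho gamma : R) (P : forall i : 'I_m.+1, 'M[R]_(n i))
  (x : nat -> block_vec R m n) (y : nat -> 'cV[R]_l) (t : nat) :
  (1 <= m)%N -> (0 < l)%N -> (forall i, (0 < n i)%N) ->
  (forall i, cvx_fun R (theta i)) ->
  (forall i, X i !=set0 /\ closed (X i) /\ cvx_set R (X i)) ->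
  (forall i, \rank (A i) = n i) ->
  (* problem (P) has a nonempty solution set *)
  (exists us : block_vec R m n,
     (forall i, X i (us i)) /\ Asum R m l n A us = b /\
     forall u : block_vec R m n, (forall i, X i (u i)) -> Asum R m l n A u = b ->
       theta_sum R m n theta us <= theta_sum R m n theta u) ->
  (* W^* is nonempty *)
  (exists (us : block_vec R m n) (ys : 'cV[R]_l),
     in_Wstar R m l n A b theta X us ys) ->
  0 < rho -> 0 < gamma < 2 ->
  (forall i, spd R (P i)) ->
  G1_pd R m l n A rho P ->
  LGADMM_seq R m l n A b theta X rho gamma P x y ->
  (0 < t)%N ->
  in_W R m l n X (xavg R m n x t) (yavg R m l n A b rho x y t) /\
  forall (u : block_vec R m n) (v : 'cV[R]_l), in_W R m l n X u v ->
    theta_sum R m n theta (xavg R m n x t) - theta_sum R m n theta u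
    + VI_term R m l n A b (xavg R m n x t) (yavg R m l n A b rho x y t) u v
    <= (2 * t.+1%:R)^-1 * Hform R m l n A rho gamma P u v (x 0%N) (y 0%N).
Proof.
move=> _ _ _ hth hXall _ _ _ r0 hg hspd hpd Hseq _.
have hX i : cvx_set R (X i) by case: (hXall i) => _ [].
split; first exact: (xavg_in_W _ _ hX Hseq).
move=> u v hu.
apply: (ergodic_bound (a := fun k => theta_sum R m n theta (xbar R m n x k))
  (v := fun k => VI_term R m l n A b (xbar R m n x k) (ybar R m l n A b rho x y k) u v)
  (h := fun k => Hform R m l n A rho gamma P u v (x k) (y k))).
- by move=> k; apply: step_bound.
- exact: Hform_ge0.
- exact: theta_sum_avg_le.
- exact: VI_term_avg.
Qed.
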